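(* Let $K$ be a compact Hausdorff space without isolated points. Then the pair $(C(K),m_0(K))$ has the Daugavet property, where $C(K)$ is regarded as a subspace of $m_0(K)$ via the quotient map $\ell_\infty(K)\to m_0(K)$.
   Context: For a compact Hausdorff space $K$: $\ell_\infty(K)$ is the space of bounded real functions on $K$ with the sup norm; $m(K)=\{f\in\ell_\infty(K): \mathrm{supp}(f)\text{ is a first category set in }K\}$; $m_0(K)=\ell_\infty(K)/m(K)$ with the quotient norm; the quotient map restricted to $C(K)$ is an isometric embedding. If $X$ is a closed subspace of a Banach space $Y$ with inclusion $J$, the pair $(X,Y)$ has the Daugavet property if every bounded rank-one linear operator $T:X\to Y$ satisfies $\|J+T\|=1+\|T\|$. *)

From HB Require Import structures.
From mathcomp Require Import all_boot all_order all_algebra.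
From mathcomp Require Import all_classical all_reals all_analysis.
Set Implicit Arguments. Unset Strict Implicit. Unset Printing Implicit Defensive.
Import Order.TTheory GRing.Theory Num.Theory numFieldNormedType.Exports.
Local Open Scope classical_set_scope.
Local Open Scope ring_scope.

Section Defs.
Context {R : realType} {K : topologicalType}.

Definition nowhere_dense (A : set K) : Prop := (closure A)° = set0.

Definition first_category (A : set K) : Prop :=
  exists F : nat -> set K, (forall n, nowhere_dense (F n)) /\ A `<=` \bigcup_n F n.

Definition supp (f : K -> R) : set K := [set x | f x != 0].

Definition bounded_fun (f : K -> R) : Prop := exists M : R, forall x, `|f x| <= M.

Definition mK (f : K -> R) : Prop := bounded_fun f /\ first_category (supp f).

Definition supn (f : K -> R) : \bar R := ereal_sup [set (`|f x|)%:E | x in [set: K]].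

(* quotient norm of the class of f in m_0(K) = l_oo(K)/m(K) *)
Definition qnorm (f : K -> R) : \bar R :=
  ereal_inf [set supn (f \- g) | g in mK].

(* operator norm of a map C(K) -> m_0(K) given on representatives *)
Definition opnorm (T : (K -> R) -> (K -> R)) : \bar R :=
  ereal_sup [set qnorm (T x) | x in [set x : K -> R | continuous x /\ (supn x <= 1)%E]].

Definition rank_one_op (T : (K -> R) -> (K -> R)) : Prop :=
  [/\ (forall x, continuous x -> bounded_fun (T x)),
      (forall (a : R) x y, continuous x -> continuous y ->
          mK (T (a *: x + y) - (a *: T x + T y))),
      (exists M : R, forall x, continuous x -> (qnorm (T x) <= M%:E * supn x)%E),
      (exists2 x0, continuous x0 & ~ mK (T x0)) &
      (exists2 y, bounded_fun y &
         forall x, continuous x -> exists c : R, mK (T x - c *: y))].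

End Defs.

From Pilot Require Import Defs.
From HB Require Import structures.
From mathcomp Require Import all_boot all_order all_algebra.
From mathcomp Require Import all_classical all_reals all_analysis.
From mathcomp Require Import ring lra.
Import Order.TTheory GRing.Theory Num.Theory numFieldNormedType.Exports.
Local Open Scope classical_set_scope.
Local Open Scope ring_scope.

(* Let x' be in the unit ball of C(K), f := T x' and q its quotient norm.  For
   e > 0 the set where |f| >= q - e/2 is of second category, hence so is its
   part where f has a constant sign s, and by the Banach category theorem it is
   of second category in every open subset of some nonempty open V.  As K has no
   isolated points, V contains infinitely many disjoint open sets, and Urysohn
   bumps u_i on them give h_i := u_i (s - x') with disjoint supports.  Since T
   has rank one, T h_i = c_i y modulo m(K); applying T to signed sums of the
   h_i shows that the c_i are absolutely summable, so some T h_i is small.  The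
   function x := x' + h_i stays in the unit ball and equals s on an open set in
   which the sign set is still of second category; there |x + f| = 1 + |f| >=
   1 + q - e/2, and T x differs from f only by the small T h_i modulo m(K). *)

Lemma normr_sign_add (R : realDomainType) (s a : R) : (s = 1 \/ s = -1) ->
  0 <= s * a -> `|s + a| = 1 + `|a|.
Proof.
case=> -> sa; first by rewrite mul1r in sa; rewrite (ger0_norm sa) ger0_norm; lra.
by rewrite mulN1r oppr_ge0 in sa; rewrite (ler0_norm sa) ler0_norm; lra.
Qed.

Lemma normr_lerp_le1 (R : realDomainType) (a c u : R) :
  `|a| <= 1 -> `|c| <= 1 -> 0 <= u <= 1 -> `|a + u * (c - a)| <= 1.
Proof.
move=> a1 c1 /andP[u0 u1].
rewrite (_ : a + u * (c - a) = (1 - u) * a + u * c); last by ring.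
apply: le_trans (ler_normD _ _) _.
rewrite !normrM (ger0_norm u0) ger0_norm ?subr_ge0 //.
by rewrite -[leRHS](subrK u) lerD // ler_piMr // subr_ge0.
Qed.

Lemma continuous_sum (R : numFieldType) (K : topologicalType) I (r : seq I)
    (P : pred I) (F : I -> K -> R) :
  (forall i, P i -> continuous (F i)) -> continuous (\sum_(i <- r | P i) F i).
Proof.
move=> cF; apply: (big_ind (fun g : K -> R => continuous g)) => //.
  by move=> t; exact: cst_continuous.
by move=> f g cf cg t; apply: continuousD; [exact: cf|exact: cg].
Qed.

Section first_category.
Context {K : topologicalType}.
Implicit Types (A B U : set K).

Lemma first_categoryS {A B} : B `<=` A -> first_category A -> first_category B.
Proof. by move=> BA [F [HF AF]]; exists F; split => //; exact: subset_trans AF. Qed.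

Lemma first_category0 : first_category (@set0 K).
Proof.
by exists (fun=> set0); split => // _; rewrite /nowhere_dense closure0 interior0.
Qed.

Lemma first_categoryU {A B} :
  first_category A -> first_category B -> first_category (A `|` B).
Proof.
move=> [F [HF AF]] [G [HG BG]].
exists (fun n => if odd n then G n./2 else F n./2); split.
  by move=> n; case: ifP.
move=> t [/AF [n _ Fn]|/BG [n _ Gn]].
  by exists n.*2 => //=; rewrite odd_double doubleK.
by exists n.*2.+1 => //=; rewrite odd_double uphalf_double.
Qed.

Lemma open_subset_interior {A B} : open A -> A `<=` B -> A `<=` B°.
Proof. by move=> oA AB; rewrite -(interior_id A).1//; exact: interiorS. Qed.

Lemma nowhere_dense_setC U : open U -> dense U -> nowhere_dense (~` U).
Proof.
move=> oU dU; rewrite /nowhere_dense closure_setC (interior_id U).1//.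
apply/seteqP; split => // t; rewrite /interior nbhsE => -[V [oV Vt] VU].
by have [z [Oz Uz]] := dU V (ex_intro _ t Vt) oV; exact: VU z Oz Uz.
Qed.

Lemma nowhere_dense_bigcup_trivIset (Ws : set (set K)) (F : set K -> set K) :
  (forall W, Ws W -> open W) -> trivIset Ws id ->
  (forall W, Ws W -> nowhere_dense (F W)) ->
  nowhere_dense (\bigcup_(W in Ws) (F W `&` W)).
Proof.
move=> oWs tWs ndF; rewrite /nowhere_dense -subset0 => z Gz.
have [v [[W WsW [_ Wv]] Gv]] := interior_subset Gz _ (nbhs_interior Gz).
(* Inside [W] the union agrees with [F W `&` W], by disjointness. *)
have GW : (closure (\bigcup_(W in Ws) (F W `&` W)))° `&` W `<=` closure (F W).
  move=> w [/interior_subset Gw Ww] B /(filterI (open_nbhs_nbhs (conj (oWs W WsW) Ww))).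
  move=> /Gw[u [[W' WsW' [FW'u W'u]] [Wu Bu]]].
  by rewrite -(tWs W' W WsW' WsW (ex_intro _ u (conj W'u Wu))); exists u.
have := ndF W WsW; rewrite /nowhere_dense -subset0 => /(_ v); apply.
by apply: (open_subset_interior (openI (open_interior _) (oWs W WsW)) GW).
Qed.

End first_category.

Section banach_category.
Context {K : topologicalType}.

(* Banach category theorem: a maximal disjoint family of open sets meeting [A]
   in a first-category set has a dense union, which covers [A] up to the
   nowhere dense complement of that union. *)
Lemma second_category_locally (A : set K) : ~ first_category A ->
  exists V, [/\ open V, V !=set0 &
    forall W, open W -> W !=set0 -> W `<=` V -> ~ first_category (A `&` W)].
Proof.
apply: contra_notP => /forallNP small.
have {}small V : open V -> V !=set0 ->
    exists W, [/\ open W, W !=set0, W `<=` V & first_category (A `&` W)].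
  move=> oV V0; apply: contra_notP (small V) => nW.
  by split => // W oW W0 WV fAW; apply: nW; exists W.
pose D := [set W | [/\ open W, W !=set0 & first_category (A `&` W)]].
have [Ws [WsD tWs maxWs]] := ex_maximal_disjoint_subcollection id D.
pose U := \bigcup_(W in Ws) W.
have dU : dense U.
  move=> V V0 oV; apply/set0P/negP => /eqP VU.
  have [W [oW W0 WV fW]] := small V oV V0.
  have WU W' : Ws W' -> W `&` W' = set0.
    move=> WsW'; apply/seteqP; split => // t [Wt W't].
    by rewrite -VU; split; [exact: WV|exists W'].
  have nWsW : ~ Ws W by move=> /WU; case: W0 => t Wt /seteqP[/(_ t (conj Wt Wt))].
  apply: (maxWs (Ws `|` [set W])).
  - by split; [exact: subsetUl | move=> /(_ W (or_intror erefl))].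
  - by move=> X [/WsD//|->].
  - move=> W1 W2 [W1s|->] [W2s|->] //; first exact: tWs.
      by rewrite setIC WU // => -[].
    by rewrite WU // => -[].
have /choice[F HF] W : exists F : nat -> set K, Ws W ->
    (forall n, nowhere_dense (F n)) /\ A `&` W `<=` \bigcup_n F n.
  have [/WsD[_ _ [F ?]]|nWs] := pselect (Ws W); first by exists F.
  by exists (fun=> set0).
exists (fun n => if n is m.+1 then \bigcup_(W in Ws) (F W m `&` W) else ~` U); split.
  case=> [|n].
    by apply: (nowhere_dense_setC _ _ dU); apply: bigcup_open => W /WsD[].
  apply: nowhere_dense_bigcup_trivIset => //; first by move=> W /WsD[].
  by move=> W /HF[].
move=> t At; have [[W WsW Wt]|nUt] := pselect (U t); last by exists 0%N.
by have [n _ Fn] := (HF W WsW).2 t (conj At Wt); exists n.+1 => //; exists W.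
Qed.

End banach_category.

Section disjoint_open_sets.
Context {K : topologicalType}.
Hypothesis hK : hausdorff_space K.
Hypothesis noiso : forall x : K, ~ open [set x].

Lemma open_split (V : set K) : open V -> V !=set0 -> exists V1 V2,
  [/\ open V1, open V2, V1 !=set0, V2 !=set0 &
      [/\ V1 `<=` V, V2 `<=` V & V1 `&` V2 = set0]].
Proof.
move=> oV [p Vp].
have [q Vq qp] : exists2 q, V q & q != p.
  apply: contra_notP (noiso p) => nq; suff -> : [set p] = V by [].
  apply/seteqP; split => [x -> //|x Vx].
  by apply: contra_notP nq => xp; exists x => //; apply/eqP.
have := hK; rewrite open_hausdorff => /(_ p q); rewrite eq_sym => /(_ qp).
move=> [[A B] /= [+ +] [oA oB /eqP AB]]; rewrite !inE => pA qB.
exists (V `&` A), (V `&` B).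
split; [exact: openI|exact: openI|by exists p|by exists q|].
split; [by move=> x []|by move=> x []|].
by rewrite setIACA AB setI0.
Qed.

(* Split off the first half repeatedly and keep the second half for later. *)
Lemma open_disjoint_seq (V : set K) : open V -> V !=set0 -> exists W : nat -> set K,
  (forall n, [/\ open (W n), W n !=set0 & W n `<=` V]) /\ trivIset setT W.
Proof.
move=> oV V0.
have /choice[sp Hsp] X : exists p : set K * set K, open X -> X !=set0 ->
    [/\ open p.1, open p.2, p.1 !=set0, p.2 !=set0 &
        [/\ p.1 `<=` X, p.2 `<=` X & p.1 `&` p.2 = set0]].
  have [[oX X0]|nX] := pselect (open X /\ X !=set0).
    by have [V1 [V2 ?]] := open_split _ oX X0; exists (V1, V2).
  by exists (set0, set0) => oX X0; case: nX.
pose Rn n := iter n (fun X => (sp X).2) V.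
have HR n : [/\ open (Rn n), Rn n !=set0 & Rn n `<=` V].
  elim: n => [|n [oR R0 RV]] /=; first by split.
  have [_ o2 _ n2 [_ s2 _]] := Hsp _ oR R0.
  by split => //; exact: subset_trans RV.
have RS n k : Rn (k + n)%N `<=` Rn n.
  elim: k => [//|k IH]; rewrite addSn /=.
  have [oR R0 _] := HR (k + n)%N; have [_ _ _ _ [_ s2 _]] := Hsp _ oR R0.
  exact: subset_trans IH.
exists (fun n => (sp (Rn n)).1); split.
  move=> n; have [oR R0 RV] := HR n; have [oW1 _ W10 _ [sW1 _ _]] := Hsp _ oR R0.
  by split => //; exact: subset_trans sW1 RV.
have disj n m : (n < m)%N -> (sp (Rn n)).1 `&` (sp (Rn m)).1 = set0.
  move=> nm; have [oR R0 _] := HR n; have [_ _ _ _ [_ _ d]] := Hsp _ oR R0.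
  rewrite -subset0 -d; apply: setIS.
  have [oRm Rm0 _] := HR m; have [_ _ _ _ [sW1 _ _]] := Hsp _ oRm Rm0.
  apply: subset_trans sW1 _.
  by have := RS n.+1 (m - n.+1)%N; rewrite subnK.
move=> n m _ _; case: (ltngtP n m) => [nm|mn|//].
  by rewrite disj // => -[].
by rewrite setIC disj // => -[].
Qed.

End disjoint_open_sets.

Section bumps.
Context {R : realType} {K : topologicalType}.
Hypothesis hK : hausdorff_space K.
Hypothesis cK : compact [set: K].

Lemma open_bump (W : set K) : open W -> W !=set0 -> exists u : K -> R,
  [/\ continuous u, (forall t, 0 <= u t <= 1), (forall t, ~ W t -> u t = 0) &
   exists B, [/\ open B, B !=set0, B `<=` W & forall t, B t -> u t = 1]].
Proof.
move=> oW [p Wp].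
have reg : {for p, regular_space K}.
  by apply: (@compact_regular _ p setT hK cK); exact: filterT.
have [U [V [oU oV Up WV UV]]] : exists U V : set K,
    [/\ open U, open V, U p, ~` W `<=` V & U `&` V = set0].
  by apply/(regular_openP p).1 => //; exact: open_closedC.
have clU : closure U `<=` W.
  have : closure U `<=` ~` V.
    rewrite [X in _ `<=` X](closure_id (~` V)).1; last exact: open_closedC.
    by apply: closureS => x Ux Vx; rewrite -[False]/(set0 x) -UV.
  by move=> + x Ux => /(_ x Ux); apply: contra_notP => /WV.
have sep : uniform_separator (~` W) (closure U).
  have := (@normal_separatorP R K).1 (compact_normal hK cK).
  apply; [exact: open_closedC|exact: closed_closure|].
  by apply/disjoints_subset => x nWx /clU /nWx.
pose u := Urysohn (R := R) (~` W) (closure U).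
have uU x : closure U x -> u x = 1.
  by move=> Ux; have /(_ (u x)) := Urysohn_sub1 (R := R) sep; apply; exists x.
exists u; split.
- exact: Urysohn_continuous.
- move=> t; have := @Urysohn_range K R _ _ (u t).
  by rewrite /= in_itv /=; apply; exists t.
- by move=> t nWt; have /(_ (u t)) := Urysohn_sub0 (R := R) sep; apply; exists t.
- exists U; split => //; first by exists p.
    by move=> x /subset_closure /clU.
  by move=> t /subset_closure /uU.
Qed.

Hypothesis noiso : forall x : K, ~ open [set x].

Lemma disjoint_bumps (V : set K) : open V -> V !=set0 ->
  exists (u : nat -> K -> R) (B : nat -> set K),
  [/\ forall i, continuous (u i), forall i t, 0 <= u i t <= 1,
      forall i, [/\ open (B i), B i !=set0, B i `<=` V & forall t, B i t -> u i t = 1]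
    & forall i j t, u i t != 0 -> u j t != 0 -> i = j].
Proof.
move=> oV V0; have [W [HW tW]] := open_disjoint_seq hK noiso _ oV V0.
have /choice[uO HuO] i : exists uO : (K -> R) * set K,
    [/\ continuous uO.1, (forall t, 0 <= uO.1 t <= 1),
        (forall t, ~ W i t -> uO.1 t = 0) &
      [/\ open uO.2, uO.2 !=set0, uO.2 `<=` W i & forall t, uO.2 t -> uO.1 t = 1]].
  have [oW W0 _] := HW i; have [u [cu u01 u0 [B HB]]] := open_bump _ oW W0.
  by exists (u, B).
exists (fun i => (uO i).1), (fun i => (uO i).2); split.
- by move=> i; have [] := HuO i.
- by move=> i; have [] := HuO i.
- move=> i; have [_ _ _ [oB B0 BW B1]] := HuO i; have [_ _ WV] := HW i.
  by split => //; exact: subset_trans WV.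
- move=> i j t uit ujt; apply: tW => //; exists t.
  have Wu k : (uO k).1 t != 0 -> W k t.
    have [_ _ uk0 _] := HuO k.
    by move=> ukt; apply: contrapT => /uk0 ukt0; rewrite ukt0 eqxx in ukt.
  by split; apply: Wu.
Qed.

End bumps.

Section quotient_norm.
Context {R : realType} {K : topologicalType}.
Implicit Types (f g h : K -> R) (A D : set K).

Lemma mK0 : mK (0 : K -> R).
Proof.
split; first by exists 0 => t; rewrite normr0.
by apply: (first_categoryS _ first_category0) => t; rewrite /supp /= eqxx.
Qed.

Lemma mKD f g : mK f -> mK g -> mK (f + g).
Proof.
move=> [[M fM] sf] [[N gN] sg]; split.
  by exists (M + N) => t; rewrite (le_trans (ler_normD _ _))// lerD.
apply: (first_categoryS _ (first_categoryU sf sg)) => t; rewrite /supp /= addrfctE.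
by case: (eqVneq (f t) 0) => [->|fn0 _]; [rewrite add0r; right|left].
Qed.

Lemma mKZ (a : R) f : mK f -> mK (a *: f).
Proof.
move=> [[M fM] sf]; split.
  by exists (`|a| * M) => t; rewrite normrM ler_wpM2l.
apply: (first_categoryS _ sf) => t.
by rewrite /supp /= scalrfctE mulf_eq0 negb_or => /andP[].
Qed.

Lemma mKN f : mK f -> mK (- f).
Proof. by move/(mKZ (-1)); rewrite scaleN1r. Qed.

Lemma mK_sum I (r : seq I) (P : pred I) (F : I -> K -> R) :
  (forall i, P i -> mK (F i)) -> mK (\sum_(i <- r | P i) F i).
Proof. by move=> mF; apply: (big_ind mK mK0 mKD). Qed.

Lemma first_category_setT_mK f :
  first_category [set: K] -> Defs.bounded_fun f -> mK f.
Proof. by move=> fT bf; split => //; exact: first_categoryS _ fT. Qed.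

Lemma supn_ge f t : ((`|f t|)%:E <= supn f)%E.
Proof. by apply: ereal_sup_ubound; exists t. Qed.

Lemma supn_le f (c : R) : (forall t, `|f t| <= c) -> (supn f <= c%:E)%E.
Proof. by move=> fc; apply/ereal_supP => _ [t _ <-]; rewrite lee_fin. Qed.

Lemma supnD f g : (supn (f + g)%R <= supn f + supn g)%E.
Proof.
apply/ereal_supP => _ [t _ <-]; apply: le_trans (leeD (supn_ge f t) (supn_ge g t)).
by rewrite -EFinD lee_fin ler_normD.
Qed.

Lemma qnorm_le f g : mK g -> (qnorm f <= supn (f - g)%R)%E.
Proof. by move=> mg; apply: ereal_inf_lbound; exists g. Qed.

Lemma qnormDm f h : mK h -> qnorm (f + h) = qnorm f.
Proof.
suff le f' h' : mK h' -> (qnorm (f' + h')%R <= qnorm f')%E.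
  by move=> mh; apply/eqP; rewrite eq_le le //= -{1}(addrK h f) le //; exact: mKN.
move=> mh; apply/ereal_infP => _ [g mg <-].
rewrite (_ : f' \- g = f' + h' - (g + h')); first by apply: qnorm_le; exact: mKD.
by rewrite opprD addrACA subrr addr0.
Qed.

Lemma supnN f : supn (- f) = supn f.
Proof.
rewrite /supn; congr (ereal_sup _); apply: eq_imagel => t _.
by rewrite opprfctE /= normrN.
Qed.

(* A function in m(K) vanishes somewhere on a set of second category. *)
Lemma qnorm_ge_on {D} f (c : R) : ~ first_category D ->
  (forall t, D t -> c <= `|f t|) -> (c%:E <= qnorm f)%E.
Proof.
move=> nD Dc; apply/ereal_infP => _ [g [_ sg] <-].
have [t Dt gt0] : exists2 t, D t & g t = 0.
  apply: contra_notP nD => ng; apply: (first_categoryS _ sg) => t Dt.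
  by apply/eqP => gt; apply: ng; exists t.
by apply: le_trans (supn_ge _ t); rewrite lee_fin /= gt0 subr0; exact: Dc.
Qed.

Lemma qnormD_supn f g (s : R) : (supn f <= s%:E)%E ->
  (qnorm (f + g)%R <= s%:E + qnorm g)%E.
Proof.
move=> fs; rewrite -leeBlDl//; apply/ereal_infP => _ [h mh <-].
rewrite leeBlDl//; apply: le_trans (qnorm_le _ _ mh) _.
have -> : f + g - h = f + (g \- h) by rewrite addrA.
by apply: le_trans (supnD _ _) _; exact: leeD.
Qed.

Lemma qnorm_le_addr f g (d : R) : (qnorm g < d%:E)%E ->
  (qnorm f <= qnorm (f + g)%R + d%:E)%E.
Proof.
move=> /ereal_inf_lt[_ [g0 mg0 <-] gd].
rewrite -(qnormDm _ _ mg0) (_ : f + g0 = (g0 - g) + (f + g)); last first.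
  by rewrite addrCA subrK.
rewrite addeC; apply: qnormD_supn.
by rewrite -opprB supnN; exact: ltW.
Qed.

Lemma second_category_level f (r : R) : ~ first_category [set: K] ->
  Defs.bounded_fun f -> (r%:E < qnorm f)%E ->
  ~ first_category [set t | r <= `|f t|].
Proof.
move=> nT [M fM] rf fr.
have [r0|r_ge0] := ltP r 0.
  by apply/nT/(first_categoryS _ fr) => t _ /=; rewrite (le_trans (ltW r0)).
pose g t := if r <= `|f t| then f t else 0.
have mg : mK g.
  split.
    by exists M => t; rewrite /g; case: ifP => // _; rewrite normr0 (le_trans _ (fM t)).
  by apply: (first_categoryS _ fr) => t; rewrite /supp /g /=; case: ifP; rewrite ?eqxx.
have : (supn (f - g)%R <= r%:E)%E.
  apply: supn_le => t; rewrite (_ : (f - g) t = f t - g t) // /g.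
  by case: ifPn => [_|]; [rewrite subrr normr0 | rewrite -ltNge subr0 => /ltW].
by move=> /(le_trans (qnorm_le _ _ mg))/(lt_le_trans rf); rewrite ltxx.
Qed.

Lemma second_category_sign (A : set K) f : ~ first_category A ->
  exists s : R, (s = 1 \/ s = -1) /\ ~ first_category [set t | A t /\ 0 <= s * f t].
Proof.
move=> nA; apply: contra_notP nA => ns.
have fc s : s = 1 \/ s = -1 -> first_category [set t | A t /\ 0 <= s * f t].
  by move=> s1; apply: contrapT => nfc; apply: ns; exists s.
have := first_categoryU (fc 1 (or_introl erefl)) (fc (-1) (or_intror erefl)).
apply: first_categoryS.
move=> t At; case: (lerP 0 (f t)) => ft; [left|right]; split; rewrite ?mul1r ?mulN1r //.
by rewrite oppr_ge0 ltW.
Qed.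

Lemma qnorm_add_sign_ge {D x f} {s r : R} : (s = 1 \/ s = -1) -> ~ first_category D ->
  (forall t, D t -> [/\ x t = s, r <= `|f t| & 0 <= s * f t]) ->
  ((1 + r)%:E <= qnorm (x + f)%R)%E.
Proof.
move=> s1 nD Dx; apply: (qnorm_ge_on _ _ nD) => t /Dx[xt rf sf].
by rewrite addrfctE /= xt normr_sign_add // lerD2l.
Qed.

Section nonempty.
Variable k0 : K.

Lemma supn_ge0 f : (0 <= supn f)%E.
Proof. exact: le_trans (supn_ge f k0). Qed.

Lemma supnZ (a : R) f : supn (a *: f) = ((`|a|)%:E * supn f)%E.
Proof.
rewrite /supn -ereal_supZl//; last by apply/set0P; exists (`|f k0|)%:E; exists k0.
congr ereal_sup; rewrite image_comp; apply: eq_imagel => t _ /=.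
by rewrite normrM EFinM.
Qed.

Lemma qnorm_ge0 f : (0 <= qnorm f)%E.
Proof. by apply/ereal_infP => _ [g _ <-]; exact: supn_ge0. Qed.

Lemma qnormZ (a : R) f : qnorm (a *: f) = ((`|a|)%:E * qnorm f)%E.
Proof.
have [->|a0] := eqVneq a 0.
  rewrite normr0 mul0e scale0r; apply/eqP; rewrite eq_le qnorm_ge0 andbT.
  apply: le_trans (qnorm_le _ _ mK0) _; rewrite subr0.
  by apply: supn_le => t; rewrite normr0.
rewrite /qnorm -ereal_inf_pZl ?normr_gt0//; congr ereal_inf; apply/seteqP; split.
  move=> _ [g mg <-]; exists (supn (f - a^-1 *: g)).
    by exists (a^-1 *: g) => //; exact: mKZ.
  by rewrite -supnZ scalerBr scalerA mulfV// scale1r.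
move=> _ [_ [g mg <-] <-]; exists (a *: g); first exact: mKZ.
by rewrite -supnZ scalerBr.
Qed.

Lemma qnorm_scale_mK {f g} {a : R} : mK (f - a *: g) ->
  qnorm f = ((`|a|)%:E * qnorm g)%E.
Proof.
by move=> m; rewrite -qnormZ -(qnormDm (a *: g) _ m) addrC subrK.
Qed.

Lemma qnorm_fin_num f : Defs.bounded_fun f -> qnorm f \is a fin_num.
Proof.
move=> [M fM]; rewrite ge0_fin_numE ?qnorm_ge0//.
apply: le_lt_trans (qnorm_le _ _ mK0) _.
by rewrite subr0; apply: le_lt_trans (supn_le _ _ fM) _; exact: ltry.
Qed.

End nonempty.
End quotient_norm.

Section rank_one_operator.
Context {R : realType} {K : topologicalType}.
Variable k0 : K.
Context {T : (K -> R) -> (K -> R)} {y : K -> R} {M : R}.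
Hypothesis Tlin : forall (a : R) x z, continuous x -> continuous z ->
  mK (T (a *: x + z) - (a *: T x + T z)).
Hypothesis TM : forall x, continuous x -> (qnorm (T x) <= M%:E * supn x)%E.
Hypothesis Ty : forall x, continuous x -> exists a : R, mK (T x - a *: y).

Lemma mK_T0 : mK (T 0).
Proof.
have c0 : continuous (0 : K -> R) by move=> t; exact: cst_continuous.
have := Tlin 1 _ _ c0 c0; rewrite !scale1r addr0 opprD addrA subrr add0r.
by move/mKN; rewrite opprK.
Qed.

Lemma mK_T_sum N (a : 'I_N -> R) (h : 'I_N -> K -> R) :
  (forall i, continuous (h i)) ->
  mK (T (\sum_(i < N) a i *: h i) - \sum_(i < N) a i *: T (h i)).
Proof.
elim: N a h => [|N IH] a h ch; first by rewrite !big_ord0 subr0; exact: mK_T0.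
rewrite !big_ord_recr /= (addrC (\sum_(i < N) _)).
set X := \sum_(i < N) _; set S := \sum_(i < N) _.
have cX : continuous X.
  by apply: continuous_sum => i _ t; apply: continuousZl_tmp; exact: ch.
have := IH (fun i => a (widen_ord (leqnSn N) i)) (fun i => h (widen_ord (leqnSn N) i)).
move=> /(_ (fun i => ch _)) mS; have := Tlin (a ord_max) _ _ (ch ord_max) cX.
set A := T _; set B := a ord_max *: T (h ord_max).
have -> : A - (S + B) = (A - (B + T X)) + (T X - S) by ring.
by move=> mA; exact: mKD.
Qed.

Lemma sum_qnorm_T_disjoint N {h : nat -> K -> R} {b : R} :
  (forall i, continuous (h i)) -> (forall i t, `|h i t| <= b) ->
  (forall i j t, h i t != 0 -> h j t != 0 -> i = j) ->
  (\sum_(i < N) qnorm (T (h i)) <= (`|M| * b)%:E)%E.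
Proof.
move=> ch hb hdisj.
have /choice[a Ha] i : exists a : R, mK (T (h i) - a *: y) := Ty _ (ch i).
pose e (i : 'I_N) : R := if 0 <= a i then 1 else -1.
have ea i : e i * a i = `|a i|.
  rewrite /e; case: ifPn => [/ger0_norm->|]; first by rewrite mul1r.
  by rewrite -ltNge mulN1r => /ltr0_norm->.
pose H := \sum_(i < N) e i *: h i.
have cH : continuous H.
  by apply: continuous_sum => i _ t; apply: continuousZl_tmp; exact: ch.
have e1 i : `|e i| = 1 by rewrite /e; case: ifP; rewrite ?normrN normr1.
have Hb t : `|H t| <= b.
  rewrite /H fct_sumE; have [[j hj]|nh] := pselect (exists j : 'I_N, h j t != 0).
    rewrite (bigD1 j) //= big1 ?addr0 => [|i ij].
      by rewrite scalrfctE normrM e1 mul1r.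
    suff hi0 : h i t = 0 by rewrite scalrfctE /= hi0 scaler0.
    apply/eqP; apply: contraR ij => hi; apply/eqP/ord_inj; exact: hdisj hi hj.
  have h0 (i : 'I_N) : h i t = 0 by apply/eqP; apply: contra_notT nh => ?; exists i.
  rewrite big1 => [|i _]; last by rewrite scalrfctE /= h0 scaler0.
  by rewrite normr0 (le_trans _ (hb 0%N t)).
have mH : mK (T H - (\sum_(i < N) `|a i|) *: y).
  have -> : T H - (\sum_(i < N) `|a i|) *: y = (T H - \sum_(i < N) e i *: T (h i))
      + \sum_(i < N) e i *: (T (h i) - a i *: y).
    have -> : \sum_(i < N) e i *: (T (h i) - a i *: y) =
        \sum_(i < N) e i *: T (h i) - (\sum_(i < N) `|a i|) *: y.
      by rewrite scaler_suml -sumrB; apply: eq_bigr => i _; rewrite scalerBr scalerA ea.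
    by rewrite addrA subrK.
  by apply: mKD; [exact: mK_T_sum | apply: mK_sum => i _; exact: mKZ].
have := TM _ cH; rewrite (qnorm_scale_mK k0 mH) ger0_norm ?sumr_ge0 //.
rewrite (eq_bigr (fun i : 'I_N => (`|a i|)%:E * qnorm y)%E); last first.
  by move=> i _; exact: qnorm_scale_mK.
rewrite -ge0_sume_distrl // sumEFin => /le_trans; apply.
have sH : supn H = (fine (supn H))%:E.
  by rewrite fineK // ge0_fin_numE ?supn_ge0 // (le_lt_trans (supn_le _ _ Hb)) ?ltry.
rewrite sH -EFinM lee_fin; apply: le_trans (ler_norm _) _.
rewrite normrM ler_wpM2l // ger0_norm -?lee_fin -?sH ?supn_ge0 //.
exact: supn_le.
Qed.

Lemma exists_qnorm_T_lt {h : nat -> K -> R} {b e : R} :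
  (forall i, continuous (h i)) -> (forall i t, `|h i t| <= b) ->
  (forall i j t, h i t != 0 -> h j t != 0 -> i = j) -> 0 < e ->
  exists i, (qnorm (T (h i)) < e%:E)%E.
Proof.
move=> ch hb hdisj e0; apply: contrapT => /forallNP small.
pose N := (Num.truncn (`|M| * b / e)).+1.
have := sum_qnorm_T_disjoint N ch hb hdisj.
have : (\sum_(i < N) e%:E <= \sum_(i < N) qnorm (T (h i)))%E.
  by apply: lee_sum => i _; rewrite leNgt; apply/negP; exact: small.
move=> /le_trans/[apply]; rewrite sumEFin sumr_const card_ord lee_fin.
rewrite -mulr_natr mulrC -ler_pdivlMr // => /(lt_le_trans (truncnS_gt _)).
by rewrite ltxx.
Qed.

Hypothesis hK : hausdorff_space K.
Hypothesis cK : compact [set: K].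
Hypothesis noiso : forall x : K, ~ open [set x].
Hypothesis nT : ~ first_category [set: K].
Hypothesis Tbd : forall x, continuous x -> Defs.bounded_fun (T x).

Lemma daugavet_approx (x' : K -> R) (e : R) :
  continuous x' -> (supn x' <= 1)%E -> 0 < e ->
  exists2 x, continuous x /\ (supn x <= 1)%E &
    (1 + qnorm (T x') <= qnorm (x + T x)%R + e%:E)%E.
Proof.
move=> cx' x'1 e0; set f := T x'.
have x'b t : `|x' t| <= 1 by rewrite -lee_fin (le_trans (supn_ge x' t)).
have qf := qnorm_fin_num k0 _ (Tbd _ cx'); set q := fine (qnorm f).
pose r := q - e / 2.
have rq : (r%:E < qnorm f)%E by rewrite -(fineK qf) lte_fin /r -/f -/q; lra.
have nA := second_category_level _ _ nT (Tbd _ cx') rq.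
have [s [s1 nAs]] := second_category_sign _ f nA.
have s_le1 : `|s| <= 1 by case: s1 => ->; rewrite ?normrN normr1.
have [V [oV V0 HV]] := second_category_locally _ nAs.
have [u [B [cu u01 HB udisj]]] := disjoint_bumps (R := R) hK cK noiso _ oV V0.
pose h i : K -> R := u i * (cst s - x').
have hE i t : h i t = u i t * (s - x' t) by [].
have ch i : continuous (h i).
  move=> t; apply: continuousM; first exact: cu.
  by apply: continuousB; [exact: cst_continuous | exact: cx'].
have hb i t : `|h i t| <= 2.
  have /andP[u0 u1] := u01 i t.
  rewrite hE normrM (ger0_norm u0) -[2]mul1r ler_pM //.
  by apply: le_trans (ler_normB _ _) _; rewrite -[2]/(1 + 1); exact: lerD.
have hdisj i j t : h i t != 0 -> h j t != 0 -> i = j.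
  by rewrite !hE !mulf_eq0 !negb_or => /andP[+ _] /andP[+ _]; exact: udisj.
have [i hi] := exists_qnorm_T_lt ch hb hdisj (divr_gt0 e0 (ltr0n _ 4)).
have [oB B0 BV B1] := HB i.
pose x := x' + h i.
have cx : continuous x by move=> t; apply: continuousD; [exact: cx' | exact: ch].
have xE t : x t = x' t + u i t * (s - x' t) by [].
exists x; first by split => //; apply: supn_le => t; rewrite xE normr_lerp_le1.
have lb : ((1 + r)%:E <= qnorm (x + f)%R)%E.
  apply: (qnorm_add_sign_ge s1 (HV _ oB B0 BV)) => t [[rf sf] Bt].
  by split => //; rewrite xE B1 // mul1r addrC subrK.
have Tx : qnorm (x + T x) = qnorm (x + f + T (h i)).
  have := Tlin 1 _ _ cx' (ch i); rewrite !scale1r -/f => /(qnormDm (x + f + T (h i))).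
  by move=> <-; congr qnorm; rewrite /x; ring.
have key : ((1 + r)%:E <= qnorm (x + T x)%R + (e / 4)%:E)%E.
  by rewrite Tx; exact: le_trans lb (qnorm_le_addr _ _ _ hi).
have qr : (1 + qnorm f <= (1 + r)%:E + (e / 2)%:E)%E.
  by rewrite -(fineK qf) -!EFinD lee_fin /r -/f -/q; lra.
apply: le_trans qr _; apply: le_trans (leeD key (lexx (e / 2)%:E)) _.
by rewrite -addeA -EFinD; apply: leeD => //; rewrite lee_fin; lra.
Qed.

End rank_one_operator.

Theorem mainTheorem9 (R : realType) (K : topologicalType)
  (hK : hausdorff_space K) (cK : compact [set: K])
  (noiso : forall x : K, ~ open [set x])
  (T : (K -> R) -> (K -> R)) (hT : rank_one_op T) :
  opnorm (R := R) (fun x => x + T x) = (1 + opnorm T)%E.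
Proof.
case: hT => Tbd Tlin [M TM] [x0 cx0 nx0] [y _ Ty].
have nT : ~ first_category [set: K].
  by move=> fT; apply/nx0/first_category_setT_mK/Tbd.
have [k0 _] : exists k0 : K, True.
  apply: contrapT => nK; apply/nT/(first_categoryS _ first_category0) => t _.
  by apply: nK; exists t.
apply/eqP; rewrite eq_le; apply/andP; split.
  apply/ereal_supP => _ [x [cx x1] <-]; apply: le_trans (qnormD_supn _ _ _ x1) _.
  by apply: leeD => //; apply: ereal_sup_ubound; exists x.
rewrite -leeBrDl //; apply/ereal_supP => _ [x' [cx' x'1] <-].
rewrite leeBrDl //; apply/lee_addgt0Pr => e e0.
have [x [cx x1] ] := daugavet_approx k0 Tlin TM Ty hK cK noiso nT Tbd _ _ cx' x'1 e0.
move/le_trans; apply; apply: leeD => //.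
by apply: ereal_sup_ubound; exists x.
Qed.
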